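(* There exists an infinite set $\mathcal S$ of prime numbers, all congruent to $2\pmod 3$, such that for every $p\in\mathcal S$: (1) for every $n\in\mathbb Z$ with $n\equiv 1/3\pmod{p-1}$ we have $\nu_p(T(n))\ge \nu_p(n-1/3)$; (2) for every $n\in\mathbb Z$ with $n\equiv -5/3\pmod{p-1}$ we have $\nu_p(T(n))\ge \nu_p(n+5/3)$.
   Context: $T:\mathbb Z\to\mathbb Z$ is the Tribonacci sequence: $T(0)=0$, $T(1)=T(2)=1$, $T(n+3)=T(n+2)+T(n+1)+T(n)$ for all $n\in\mathbb Z$. For a prime $p$, $\nu_p$ is the $p$-adic valuation on $\mathbb Q$, with $\nu_p(0)=+\infty$. Convention for congruences of rationals: for $x,y\in\mathbb Q$ and a positive integer $M$, $x\equiv y\pmod M$ means there exists $m\in\mathbb Z$ with $\gcd(m,M)=1$, $mx,my\in\mathbb Z$ and $mx\equiv my\pmod M$ (for $p\equiv 2\pmod 3$ one has $3\nmid p-1$, so the classes $1/3$ and $-5/3$ modulo $p-1$ make sense). *)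

From mathcomp Require Import all_boot all_order all_algebra.
Set Implicit Arguments. Unset Strict Implicit. Unset Printing Implicit Defensive.
Import Order.TTheory GRing.Theory Num.Theory.
Local Open Scope ring_scope.

Fixpoint trib_fwd (k : nat) : int * int * int :=
  match k with
  | 0%N => (0, 1, 1)
  | k'.+1 => let: (a, b, c) := trib_fwd k' in (b, c, a + b + c)
  end.

(* Backward iteration: trib_bwd k = (T (-k), T (-k+1), T (-k+2)),
   using T(m) = T(m+3) - T(m+2) - T(m+1). *)
Fixpoint trib_bwd (k : nat) : int * int * int :=
  match k with
  | 0%N => (0, 1, 1)
  | k'.+1 => let: (a, b, c) := trib_bwd k' in (c - b - a, a, b)
  end.

Definition trib (n : int) : int :=
  match n with
  | Posz k => (trib_fwd k).1.1
  | Negz k => (trib_bwd k.+1).1.1   (* Negz k = -(k+1) *)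
  end.

(* p-adic valuation on Q; None encodes +infinity (valuation of 0). *)
Definition padic_val (p : nat) (x : rat) : option int :=
  if x == 0 then None
  else Some ((logn p `|numq x|%N)%:Z - (logn p `|denq x|%N)%:Z).

Definition val_ge (a b : option int) : bool :=
  match a, b with
  | None, _ => true
  | Some _, None => false
  | Some a, Some b => b <= a
  end.

Definition rat_congr (M : int) (x y : rat) : Prop :=
  exists m a b : int,
    coprimez m M /\ m%:~R * x = a%:~R /\ m%:~R * y = b%:~R /\
    (a == b %[mod M])%Z.

Example trib_check : [:: trib 0; trib 1; trib 2; trib 3; trib 4; trib (-1); trib (-2); trib (-3); trib (-4)]
  = [:: 0; 1; 1; 2; 4; 0; 1; -1; 0].
Proof. by []. Qed.

(* Let f = X^3 - X^2 - X - 1 be the Tribonacci polynomial and p > 22 a prime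
   modulo which f has three distinct roots.  By Hensel's lemma they lift to roots
   a1, a2, a3 modulo p^k, and Binet's formula holds modulo p^k:
     V * T(N) = sum a_i^(N+1) (a_j - a_k),   V = (a1 - a2)(a2 - a3)(a1 - a3),
   with V a unit.  Modulo f one has (a^2 - a)^3 = 2a, so when 3N = 1 modulo
   phi(p^k) Euler's theorem gives 2^N a^N = a^2 - a, hence 2^N a^(N+1) = a + 1
   and 2^N a^(N-1) = a - 1 at every root.  Since sum (a_i + c)(a_j - a_k) = 0,
   p^k divides T(N) and T(N - 2); the periodicity of T modulo p^k moves the
   argument to any integer, giving the classes 1/3 and -5/3.
   Infinitely many such primes are 2 modulo 3: they divide
   44 b^6 + 16 b^4 - 8 b^2 + 1, at which f has explicit roots. *)

From mathcomp Require Import all_boot all_order all_algebra cyclic.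
From mathcomp Require Import ring lra zify.
Set Implicit Arguments. Unset Strict Implicit. Unset Printing Implicit Defensive.
Import Order.TTheory GRing.Theory Num.Theory.
Local Open Scope ring_scope.

Lemma trib_fwdE (k : nat) : trib_fwd k = (trib k, trib k.+1, trib k.+2).
Proof. by elim: k => //= k ->. Qed.

Lemma trib_bwdE (k : nat) :
  trib_bwd k = (trib (- k%:Z), trib (1 - k%:Z), trib (2 - k%:Z)).
Proof.
elim: k => // k /= ->.
have -> : 1 - k.+1%:Z = - k%:Z by lia.
by have -> : 2 - k.+1%:Z = 1 - k%:Z by lia.
Qed.

Lemma trib_rec (n : int) : trib (n + 3) = trib (n + 2) + trib (n + 1) + trib n.
Proof.
case: n => [k|k].
- have /(congr1 snd) := trib_fwdE k.+1.
  rewrite -[trib_fwd k.+1]/(let: (a, b, c) := trib_fwd k in (b, c, a + b + c)).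
  rewrite trib_fwdE; cbn [fst snd] => e.
  have -> : k%:Z + 3 = k.+3%:Z by lia.
  have -> : k%:Z + 2 = k.+2%:Z by lia.
  have -> : k%:Z + 1 = k.+1%:Z by lia.
  by rewrite -e; ring.
- have /(congr1 (fun t => t.1.1)) := trib_bwdE k.+1.
  rewrite -[trib_bwd k.+1]/(let: (a, b, c) := trib_bwd k in (c - b - a, a, b)).
  rewrite trib_bwdE; cbn [fst snd] => e.
  rewrite NegzE.
  have -> : - k.+1%:Z + 3 = 2 - k%:Z by lia.
  have -> : - k.+1%:Z + 2 = 1 - k%:Z by lia.
  have -> : - k.+1%:Z + 1 = - k%:Z by lia.
  by rewrite -e; ring.
Qed.

Lemma dvdz_linrec3_nat (d x y z : int) (u : nat -> int) :
  (forall k, (d %| u k.+3 - (x * u k.+2 + y * u k.+1 + z * u k))%Z) ->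
  (d %| u 0%N)%Z -> (d %| u 1%N)%Z -> (d %| u 2%N)%Z -> forall k, (d %| u k)%Z.
Proof.
move=> rec h0 h1 h2 k.
suff /and3P[] : [&& d %| u k, d %| u k.+1 & d %| u k.+2]%Z by [].
elim: k => [|k /and3P[hk hk1 hk2]]; first exact/and3P.
apply/and3P; split => //.
rewrite -(subrK (x * u k.+2 + y * u k.+1 + z * u k) (u k.+3)).
by rewrite rpredD // !rpredD // dvdz_mull.
Qed.

Lemma dvdz_linrec3 (d : int) (u : int -> int) :
  (forall n, (d %| u (n + 3) - (u (n + 2) + u (n + 1) + u n))%Z) ->
  (d %| u 0)%Z -> (d %| u 1)%Z -> (d %| u 2)%Z -> forall n, (d %| u n)%Z.
Proof.
move=> rec h0 h1 h2 [k|k].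
- apply: (@dvdz_linrec3_nat d 1 1 1 (fun k : nat => u k)) => // {}k.
  have := rec k; rewrite !mul1r.
  have -> : k%:Z + 3 = k.+3 by lia.
  have -> : k%:Z + 2 = k.+2 by lia.
  by have -> : k%:Z + 1 = k.+1 by lia.
- rewrite NegzE; have -> : - k.+1%:Z = 2 - k.+3%:Z by lia.
  (* Read backwards, v k := u (2 - k) satisfies v (k + 3) = v k - v (k + 1) - v (k + 2). *)
  apply: (@dvdz_linrec3_nat d (-1) (-1) 1 (fun k : nat => u (2 - k%:Z))) => // {}k.
  rewrite -rpredN.
  have := rec (- k.+1%:Z).
  have -> : - k.+1%:Z + 3 = 2 - k%:Z by lia.
  have -> : - k.+1%:Z + 2 = 2 - k.+1%:Z by lia.
  have -> : - k.+1%:Z + 1 = 2 - k.+2%:Z by lia.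
  have -> : - k.+1%:Z = 2 - k.+3%:Z by lia.
  by congr (_ %| _)%Z; ring.
Qed.

Definition tribpoly (x : int) : int := x ^+ 3 - x ^+ 2 - x - 1.

Definition vander3 (a1 a2 a3 : int) : int := (a1 - a2) * (a2 - a3) * (a1 - a3).

Definition altsum (g : int -> int) (a1 a2 a3 : int) : int :=
  g a1 * (a2 - a3) + g a2 * (a3 - a1) + g a3 * (a1 - a2).

Section TribonacciRoots.
Variables (d a1 a2 a3 : int).

Lemma dvdz_altsum (g : int -> int) :
  (d %| g a1)%Z -> (d %| g a2)%Z -> (d %| g a3)%Z -> (d %| altsum g a1 a2 a3)%Z.
Proof. by move=> h1 h2 h3; rewrite !rpredD ?dvdz_mulr. Qed.

Hypotheses (ha1 : (d %| tribpoly a1)%Z) (ha2 : (d %| tribpoly a2)%Z)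
  (ha3 : (d %| tribpoly a3)%Z).

Lemma dvdz_binet (N : nat) :
  (d %| vander3 a1 a2 a3 * trib N - altsum (fun a => a ^+ N.+1) a1 a2 a3)%Z.
Proof.
apply: (@dvdz_linrec3_nat d 1 1 1
  (fun N => vander3 a1 a2 a3 * trib N - altsum (fun a => a ^+ N.+1) a1 a2 a3)) => [{}N|||].
- have -> : N.+3%:Z = N%:Z + 3 by lia.
  rewrite trib_rec.
  have -> : N%:Z + 2 = N.+2 by lia.
  have -> : N%:Z + 1 = N.+1 by lia.
  rewrite (_ : _ - _ = altsum (fun a => - (a ^+ N.+1 * tribpoly a)) a1 a2 a3).
    by apply: dvdz_altsum; rewrite rpredN dvdz_mull.
  by rewrite /altsum /tribpoly !exprS; ring.
- by rewrite (_ : _ - _ = 0) ?dvdz0 // /altsum /vander3 /=; ring.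
- by rewrite (_ : _ - _ = 0) ?dvdz0 // /altsum /vander3 /=; ring.
- rewrite (_ : _ - _ = altsum (fun a => - tribpoly a) a1 a2 a3).
    by apply: dvdz_altsum; rewrite rpredN.
  by rewrite /altsum /vander3 /tribpoly /=; ring.
Qed.

Lemma dvdz_vander3_trib (c x y : int) (N : nat) :
  (forall a, a \in [:: a1; a2; a3] -> (d %| c * a ^+ N.+1 - (x * a + y))%Z) ->
  (d %| c * vander3 a1 a2 a3 * trib N)%Z.
Proof.
move=> h.
(* [altsum] vanishes on affine functions. *)
have -> : c * vander3 a1 a2 a3 * trib N =
  c * (vander3 a1 a2 a3 * trib N - altsum (fun a => a ^+ N.+1) a1 a2 a3) +
  altsum (fun a => c * a ^+ N.+1 - (x * a + y)) a1 a2 a3 by rewrite /altsum; ring.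
apply: rpredD; first exact/dvdz_mull/dvdz_binet.
by apply: dvdz_altsum; apply: h; rewrite !inE eqxx ?orbT.
Qed.

Lemma dvdz_vander3_trib_period (m : nat) :
  (forall a, a \in [:: a1; a2; a3] -> (d %| a ^+ m - 1)%Z) ->
  forall n : int, (d %| vander3 a1 a2 a3 * (trib (n + m) - trib n))%Z.
Proof.
move=> h.
have base (N : nat) : (d %| vander3 a1 a2 a3 * (trib (N + m)%N - trib N))%Z.
  have -> : vander3 a1 a2 a3 * (trib (N + m)%N - trib N) =
    (vander3 a1 a2 a3 * trib (N + m)%N - altsum (fun a => a ^+ (N + m).+1) a1 a2 a3)
    - (vander3 a1 a2 a3 * trib N - altsum (fun a => a ^+ N.+1) a1 a2 a3)
    + altsum (fun a => a ^+ N.+1 * (a ^+ m - 1)) a1 a2 a3.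
    by rewrite /altsum -addSn !exprD; ring.
  apply: rpredD; first exact: rpredB (dvdz_binet _) (dvdz_binet _).
  by apply: dvdz_altsum; apply: dvdz_mull; apply: h; rewrite !inE eqxx ?orbT.
apply: dvdz_linrec3; [move=> n|exact: (base 0%N)|exact: (base 1%N)|exact: (base 2%N)].
rewrite !(addrAC n _ m%:Z) (trib_rec (n + m)) (trib_rec n).
by rewrite (_ : _ - _ = 0) ?dvdz0 //; ring.
Qed.

End TribonacciRoots.

Lemma dvdz_subXX (d x y : int) (n : nat) : (d %| x - y)%Z -> (d %| x ^+ n - y ^+ n)%Z.
Proof. by move=> h; rewrite subrXX dvdz_mulr. Qed.

Lemma dvdz_expr_totient (n : nat) (x : int) :
  coprimez x n -> (n%:Z %| x ^+ totient n - 1)%Z.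
Proof.
case: n => [|n] cxn; first by rewrite subrr dvdz0.
set r := `|(x %% n.+1)%Z|%N.
have rE : r%:Z = (x %% n.+1)%Z by rewrite gez0_abs ?modz_ge0.
have cr : coprime r n.+1 by move: cxn; rewrite /coprimez -gcdz_modl -rE.
rewrite -eqz_mod_dvd -modzXm -rE -natz -natrX natz modz_nat Euler_exp_totient //.
by rewrite -modz_nat.
Qed.

Section TribpolyRoot.
Variables (d a : int).
Hypothesis ha : (d %| tribpoly a)%Z.

Lemma tribpoly_root_pow3 (N : nat) : (d %| (a ^+ 2 - a) ^+ (3 * N) - 2 ^+ N * a ^+ N)%Z.
Proof.
rewrite exprM -exprMn; apply: dvdz_subXX.
have -> : (a ^+ 2 - a) ^+ 3 - 2 * a = tribpoly a * (a ^+ 3 - 2 * a ^+ 2 + 2 * a).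
  by rewrite /tribpoly; ring.
exact: dvdz_mulr.
Qed.

Lemma tribpoly_root_powS (N : nat) :
  (d %| 2 ^+ N * a ^+ N - (a ^+ 2 - a))%Z -> (d %| 2 ^+ N * a ^+ N.+1 - (a + 1))%Z.
Proof.
move=> h; have -> : 2 ^+ N * a ^+ N.+1 - (a + 1) =
  a * (2 ^+ N * a ^+ N - (a ^+ 2 - a)) + tribpoly a by rewrite /tribpoly exprS; ring.
by rewrite rpredD ?dvdz_mull.
Qed.

Lemma tribpoly_root_powP (N : nat) :
  (d %| 2 ^+ N.+1 * a ^+ N.+1 - (a ^+ 2 - a))%Z -> (d %| 2 ^+ N.+1 * a ^+ N - (a - 1))%Z.
Proof.
move=> h; have -> : 2 ^+ N.+1 * a ^+ N - (a - 1) =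
  (a ^+ 2 - a - 1) * (2 ^+ N.+1 * a ^+ N.+1 - (a ^+ 2 - a))
  - tribpoly a * (2 ^+ N.+1 * a ^+ N - (a - 1)) by rewrite /tribpoly [a ^+ N.+1]exprS; ring.
by apply: rpredB; [apply: dvdz_mull | apply: dvdz_mulr].
Qed.

End TribpolyRoot.

Lemma PoszX (m n : nat) : (m ^ n)%N%:Z = m%:Z ^+ n.
Proof. by rewrite -natz natrX natz. Qed.

Lemma dvdz_congr (d x y : int) : (d %| x - y)%Z -> (d %| x)%Z = (d %| y)%Z.
Proof. by move=> h; rewrite -(subrK y x) rpredDl. Qed.

Definition tribpoly' (x : int) : int := 3 * x ^+ 2 - 2 * x - 1.

(* 22 is half the discriminant -44 of [tribpoly], up to sign. *)
Lemma tribpoly_double_root (d x : int) :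
  (d %| tribpoly x)%Z -> (d %| tribpoly' x)%Z -> (d %| 22)%Z.
Proof.
move=> h h'.
have -> : 22%Z = (12 * x - 23) * tribpoly x + (- 4 * x ^+ 2 + 9 * x + 1) * tribpoly' x.
  by rewrite /tribpoly /tribpoly'; ring.
by rewrite rpredD ?dvdz_mull.
Qed.

Section PrimeModulus.
Variable p : nat.
Hypothesis pp : prime p.

Lemma coprimez_prime (x : int) : coprimez x p = ~~ (p%:Z %| x)%Z.
Proof. by rewrite coprimezE coprime_sym prime_coprime. Qed.

Lemma Euclidz_dvdM (x y : int) : (p%:Z %| x * y)%Z = (p%:Z %| x)%Z || (p%:Z %| y)%Z.
Proof. by rewrite !dvdzE abszM Euclid_dvdM. Qed.

Lemma tribpoly_root_diffq (x y : int) :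
  (p%:Z %| tribpoly x)%Z -> (p%:Z %| tribpoly y)%Z -> ~~ (p%:Z %| x - y)%Z ->
  (p%:Z %| x ^+ 2 + x * y + y ^+ 2 - x - y - 1)%Z.
Proof.
move=> hx hy nxy.
have : (p%:Z %| (x - y) * (x ^+ 2 + x * y + y ^+ 2 - x - y - 1))%Z.
  have -> : (x - y) * (x ^+ 2 + x * y + y ^+ 2 - x - y - 1) = tribpoly x - tribpoly y.
    by rewrite /tribpoly; ring.
  exact: rpredB.
by rewrite Euclidz_dvdM (negbTE nxy).
Qed.

Lemma tribpoly_roots_vander3 (x y z : int) : ~~ (p%:Z %| 22)%Z ->
  (p%:Z %| tribpoly x)%Z -> (p%:Z %| tribpoly y)%Z -> (p%:Z %| tribpoly z)%Z ->
  (p%:Z %| x + y + z - 1)%Z -> ~~ (p%:Z %| x - y)%Z -> ~~ (p%:Z %| vander3 x y z)%Z.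
Proof.
move=> n22 hx hy hz hs nxy.
(* If two of the roots coincide, x + y + z = 1 forces the third one to be 1 - 2u,
   and u is then a double root. *)
have double u w : (p%:Z %| tribpoly u)%Z -> (p%:Z %| tribpoly w)%Z ->
    ~~ (p%:Z %| u - w)%Z -> (p%:Z %| w + 2 * u - 1)%Z -> (p%:Z %| 22)%Z.
  move=> hu hw nuw huw; apply: (tribpoly_double_root hu).
  have -> : tribpoly' u =
      (u ^+ 2 + u * w + w ^+ 2 - u - w - 1) - (w - u) * (w + 2 * u - 1).
    by rewrite /tribpoly'; ring.
  by rewrite rpredB ?dvdz_mull ?tribpoly_root_diffq.
rewrite /vander3 !Euclidz_dvdM (negbTE nxy) /=; apply/norP; split; apply: contra n22 => h.
- apply: (double y x) => //; first by rewrite -rpredN opprB.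
  have -> : x + 2 * y - 1 = (x + y + z - 1) + (y - z) by ring.
  exact: rpredD.
- apply: (double x y) => //.
  have -> : y + 2 * x - 1 = (x + y + z - 1) + (x - z) by ring.
  exact: rpredD.
Qed.

Lemma tribpoly_hensel (r : int) :
  (p%:Z %| tribpoly r)%Z -> ~~ (p%:Z %| tribpoly' r)%Z ->
  forall k, exists a, (p%:Z ^+ k.+1 %| tribpoly a)%Z /\ (p%:Z %| a - r)%Z.
Proof.
move=> hr hr'.
(* Newton iteration a |-> a - tribpoly a * u, with u inverting tribpoly' r modulo p. *)
have [[u v] /= huv] : exists uv : int * int, uv.1 * tribpoly' r + uv.2 * p = 1.
  by apply/coprimezP; rewrite coprimez_prime.
elim=> [|k [a [ha har]]]; first by exists r; rewrite expr1 subrr dvdz0.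
have hpa : (p%:Z %| tribpoly a)%Z by apply: dvdz_trans ha; rewrite exprS dvdz_mulr.
have hu : (p%:Z %| 1 - u * tribpoly' a)%Z.
  have -> : 1 - u * tribpoly' a = v * p - u * ((a - r) * (3 * a + 3 * r - 2)).
    by rewrite -{1}huv /tribpoly'; ring.
  by apply: rpredB; apply: dvdz_mull; [exact: dvdzz | exact: dvdz_mulr].
exists (a - tribpoly a * u); split; last first.
  by rewrite addrAC rpredB // dvdz_mulr.
have -> : tribpoly (a - tribpoly a * u) = tribpoly a * (1 - u * tribpoly' a)
    + tribpoly a ^+ 2 * (u ^+ 2 * (3 * a - 1) - tribpoly a * u ^+ 3).
  by rewrite /tribpoly /tribpoly'; ring.
apply: rpredD; first by rewrite exprSr dvdz_mul.
apply/dvdz_mulr/(dvdz_trans _ (dvdz_exp2r 2 ha)).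
by rewrite -exprM dvdz_exp2l //; lia.
Qed.

Lemma tribpoly_lift_roots (r1 r2 r3 : int) : ~~ (p%:Z %| 22)%Z ->
  (p%:Z %| tribpoly r1)%Z -> (p%:Z %| tribpoly r2)%Z -> (p%:Z %| tribpoly r3)%Z ->
  ~~ (p%:Z %| vander3 r1 r2 r3)%Z ->
  forall k, exists a1 a2 a3,
    [/\ (p%:Z ^+ k.+1 %| tribpoly a1)%Z, (p%:Z ^+ k.+1 %| tribpoly a2)%Z,
        (p%:Z ^+ k.+1 %| tribpoly a3)%Z & ~~ (p%:Z %| vander3 a1 a2 a3)%Z].
Proof.
move=> n22 h1 h2 h3 nD k.
have lift r : (p%:Z %| tribpoly r)%Z ->
    exists a, (p%:Z ^+ k.+1 %| tribpoly a)%Z /\ (p%:Z %| a - r)%Z.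
  move=> hr; apply: tribpoly_hensel => //.
  by apply: contra n22; apply: tribpoly_double_root hr.
have [a1 [g1 e1]] := lift _ h1; have [a2 [g2 e2]] := lift _ h2.
have [a3 [g3 e3]] := lift _ h3.
exists a1, a2, a3; split => //.
have diff x y s t : (p%:Z %| x - s)%Z -> (p%:Z %| y - t)%Z ->
    (p%:Z %| (x - y) - (s - t))%Z.
  move=> hx hy; have -> : (x - y) - (s - t) = (x - s) - (y - t) by ring.
  exact: rpredB.
move: nD; rewrite /vander3 !Euclidz_dvdM.
by rewrite (dvdz_congr (diff _ _ _ _ e1 e2)) (dvdz_congr (diff _ _ _ _ e2 e3))
  (dvdz_congr (diff _ _ _ _ e1 e3)).
Qed.

End PrimeModulus.

Lemma ndvdz_small (p c : nat) : (c < p)%N -> (0 < c)%N -> ~~ (p%:Z %| c%:Z)%Z.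
Proof. by move=> cp c0; rewrite dvdzE /=; apply/negP => /(dvdn_leq c0); lia. Qed.

Lemma tribpoly_root_coprime (p : nat) (a : int) : prime p -> (2 < p)%N ->
  (p%:Z %| tribpoly a)%Z -> coprimez (a ^+ 2 - a) p.
Proof.
move=> pp p_gt2 ha; rewrite coprimez_prime // (_ : _ - _ = a * (a - 1)); last by ring.
rewrite Euclidz_dvdM //; apply/norP; split.
- apply: contra (ndvdz_small (prime_gt1 pp) isT) => h.
  have -> : 1%N%:Z = a * (a ^+ 2 - a - 1) - tribpoly a by rewrite /tribpoly; ring.
  by rewrite rpredB ?dvdz_mulr.
- apply: contra (ndvdz_small p_gt2 isT) => h.
  have -> : 2%N%:Z = (a - 1) * (a ^+ 2 - 1) - tribpoly a by rewrite /tribpoly; ring.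
  by rewrite rpredB ?dvdz_mulr.
Qed.

Lemma nat_shift_exists (m b : nat) (n : int) : (0 < m)%N ->
  exists t N : nat, N%:Z = n + (m * t)%N%:Z /\ (b <= N)%N.
Proof.
move=> m_gt0; exists (`|n| + b)%N, (absz (n + (m * (`|n| + b))%N%:Z)).
have h : (`|n| + b <= m * (`|n| + b))%N by rewrite leq_pmull.
split; [rewrite gez0_abs //|]; lia.
Qed.

Lemma dvdz_pred_exists (m N : nat) : (0 < N)%N -> (m%:Z %| N%:Z - 1)%Z ->
  exists s, N = (m * s).+1.
Proof.
move=> N_gt0 /dvdzP[c hc]; exists `|c|%N.
have : 0 <= c \/ m = 0%N by nia.
case=> [c_ge0|m0]; last by move: hc; rewrite m0; lia.
apply/eqP; rewrite -eqz_nat; apply/eqP; rewrite -addn1 PoszD PoszM gez0_abs //; lia.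
Qed.

Section PrimePowerRoots.
Variables (p k : nat) (a1 a2 a3 : int).
Hypotheses (pp : prime p) (p_gt2 : (2 < p)%N).
Local Notation q := (p ^ k.+1)%N.
Hypotheses (ha1 : (q%:Z %| tribpoly a1)%Z) (ha2 : (q%:Z %| tribpoly a2)%Z)
  (ha3 : (q%:Z %| tribpoly a3)%Z) (hD : ~~ (p%:Z %| vander3 a1 a2 a3)%Z).

Let coprimez_q (x : int) : ~~ (p%:Z %| x)%Z -> coprimez x q.
Proof. by move=> hx; rewrite PoszX coprimez_pexpr // coprimez_prime. Qed.

Let dvdz_p (x : int) : (q%:Z %| x)%Z -> (p%:Z %| x)%Z.
Proof. by apply: dvdz_trans; rewrite PoszX exprS dvdz_mulr. Qed.

Let roots a : a \in [:: a1; a2; a3] -> (q%:Z %| tribpoly a)%Z.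
Proof. by rewrite !inE => /or3P[] /eqP ->. Qed.

Let root_unit a : a \in [:: a1; a2; a3] -> coprimez (a ^+ 2 - a) q.
Proof.
move=> /roots /dvdz_p /(tribpoly_root_coprime pp p_gt2).
by rewrite coprimez_prime // => /coprimez_q.
Qed.

Lemma trib_period_ppow (t : nat) (n : int) :
  (q%:Z %| trib (n + (totient q * t)%N) - trib n)%Z.
Proof.
rewrite -(@Gauss_dvdzr _ (vander3 a1 a2 a3)); last by rewrite coprimez_sym coprimez_q.
apply: (dvdz_vander3_trib_period ha1 ha2 ha3) => a /root_unit.
rewrite (_ : _ - _ = a * (a - 1)) ?coprimezMl; last by ring.
case/andP => /dvdz_expr_totient cq _.
by rewrite exprM -(expr1n _ t) dvdz_subXX.
Qed.

Let root_pow a (M s : nat) : a \in [:: a1; a2; a3] ->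
  (3 * M)%N = (totient q * s).+1 -> (q%:Z %| 2 ^+ M * a ^+ M - (a ^+ 2 - a))%Z.
Proof.
move=> ha e; have /dvdz_expr_totient cq := root_unit ha.
set b := a ^+ 2 - a.
have -> : 2 ^+ M * a ^+ M - b = (b ^+ (3 * M) - b) - (b ^+ (3 * M) - 2 ^+ M * a ^+ M).
  by ring.
rewrite rpredB ?tribpoly_root_pow3 ?roots // e exprS exprM -[X in _ - X](mulr1 b) -mulrBr.
by apply: dvdz_mull; rewrite -(expr1n _ s) dvdz_subXX.
Qed.

Let coprimez_q_2Xvander3 (M : nat) : coprimez q (2 ^+ M * vander3 a1 a2 a3).
Proof.
rewrite coprimez_sym coprimezMl (coprimez_q hD) andbT.
exact/coprimezXl/coprimez_q/(ndvdz_small p_gt2).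
Qed.

Lemma trib_dvd_ppow_nat (j M s : nat) : j \in [:: 0; 2]%N ->
  (3 * (M + j))%N = (totient q * s).+1 -> (q%:Z %| trib M)%Z.
Proof.
rewrite !inE => /orP[] /eqP -> e.
- rewrite addn0 in e; rewrite -(Gauss_dvdzr _ (coprimez_q_2Xvander3 M)).
  apply: (dvdz_vander3_trib ha1 ha2 ha3 (x := 1) (y := 1)) => a ha.
  by rewrite mul1r; apply: tribpoly_root_powS (roots ha) _ (root_pow ha e).
- rewrite addn2 in e; rewrite -(Gauss_dvdzr _ (coprimez_q_2Xvander3 M.+2)).
  apply: (dvdz_vander3_trib ha1 ha2 ha3 (x := 1) (y := -1)) => a ha.
  by rewrite mul1r; apply: tribpoly_root_powP (roots ha) _ (root_pow ha e).
Qed.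

Lemma trib_dvd_ppow (j : nat) (n : int) : j \in [:: 0; 2]%N ->
  ((totient q)%:Z %| 3 * (n + j%:Z) - 1)%Z -> (q%:Z %| trib n)%Z.
Proof.
move=> hj h; have phi_gt0 : (0 < totient q)%N by rewrite totient_gt0 expn_gt0 prime_gt0.
have [t [N [NE N_gt0]]] := nat_shift_exists 1 n phi_gt0.
have [s e] : exists s, (3 * (N + j))%N = (totient q * s).+1.
  apply: dvdz_pred_exists; first by lia.
  have -> : (3 * (N + j))%N%:Z - 1 = 3 * (n + j%:Z) - 1 + (totient q)%:Z * (3 * t%:Z).
    by rewrite PoszM PoszD NE PoszM; ring.
  by rewrite rpredD // dvdz_mulr.
have -> : trib n = trib N - (trib (n + (totient q * t)%N) - trib n) by rewrite NE; ring.
by rewrite rpredB ?trib_period_ppow // (trib_dvd_ppow_nat hj e).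
Qed.

End PrimePowerRoots.

Lemma rat_congr_third (M n c : int) : coprimez c 3 ->
  rat_congr M n%:~R (c%:~R / 3) -> (M %| 3 * n - c)%Z.
Proof.
move=> c3 [m [a [b [cm [ha [hb hab]]]]]].
have mcb : m * c = 3 * b by apply: (@intr_inj rat); rewrite !intrM -hb; field.
have /dvdzP[e me] : (3 %| m)%Z.
  by rewrite -(@Gauss_dvdzl 3 m c) 1?coprimez_sym // mcb dvdz_mulr.
have be : b = e * c.
  by apply: (@mulfI _ 3) => //; rewrite -mcb me; ring.
have an : a = m * n by apply: (@intr_inj rat); rewrite intrM.
move: hab cm; rewrite eqz_mod_dvd an be me (_ : _ - _ = e * (3 * n - c)); last by ring.
rewrite coprimezMl => hab /andP[ce _].
by rewrite -(Gauss_dvdzr _ (_ : coprimez M e)) // coprimez_sym.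
Qed.

Lemma padic_val_ge_third (p : nat) (t c : int) : prime p -> (3 < p)%N -> coprimez c 3 ->
  (forall k : nat, ((p ^ k)%N%:Z %| c)%Z -> ((p ^ k)%N%:Z %| t)%Z) ->
  val_ge (padic_val p t%:~R) (padic_val p (c%:~R / 3)).
Proof.
move=> pp p_gt3 c3 hk.
have c0 : c != 0 by apply: contraTneq c3 => ->.
have -> : (3 : rat) = (3 : int)%:~R by [].
rewrite /padic_val mulf_eq0 invr_eq0 !intr_eq0 (negbTE c0) /=.
rewrite coprimeq_num // coprimeq_den //= numq_int denq_int.
case: eqP => // /eqP t0 /=.
rewrite logn1 (@logn_coprime p 3); last first.
  by rewrite prime_coprime //; apply/negP => /dvdn_leq => /(_ isT); lia.
rewrite !subr0 gtr0_sg // mul1r lez_nat -pfactor_dvdn ?absz_gt0 //.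
by apply: (hk (logn p `|c|)); rewrite dvdzE pfactor_dvdnn.
Qed.

Lemma prime_dvd_mod3_2 (n : nat) : (n %% 3 = 2)%N ->
  exists p, [/\ prime p, (p %| n)%N & (p %% 3 = 2)%N].
Proof.
elim/ltn_ind: n => n IH n3.
have n_gt1 : (1 < n)%N by case: n n3 {IH} => [|[|]].
set q := pdiv n; have [qp qn] : prime q /\ (q %| n)%N by rewrite pdiv_prime ?pdiv_dvd.
have nE : n = (n %/ q * q)%N by rewrite divnK.
have : (q %% 3 < 3)%N by rewrite ltn_pmod.
case e : (q %% 3)%N => [|[|[|//]]] _; last by exists q.
- by move: n3; rewrite nE -modnMmr e muln0.
- have m3 : (n %/ q %% 3 = 2)%N by move: n3; rewrite {1}nE -modnMmr e muln1.
  have lt_nq : (n %/ q < n)%N by rewrite ltn_Pdiv ?prime_gt1 // ltnW.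
  have [p [pp pm p3]] := IH _ lt_nq m3.
  by exists p; rewrite nE dvdn_mulr.
Qed.

(* Modulo split_H b, the Tribonacci polynomial has the roots split_Ai b / split_B b. *)
Definition split_H (b : int) : int := 44 * b ^+ 6 + 16 * b ^+ 4 - 8 * b ^+ 2 + 1.
Definition split_B (b : int) : int := 76 * b ^+ 4.
Definition split_A1 (b : int) : int := 4 * b ^+ 4 + 38 * b ^+ 3 + 20 * b ^+ 2 - 3.
Definition split_A2 (b : int) : int := split_A1 b - 76 * b ^+ 3.
Definition split_A3 (b : int) : int := split_B b - split_A1 b - split_A2 b.

Definition tribhom (x y : int) : int := x ^+ 3 - x ^+ 2 * y - x * y ^+ 2 - y ^+ 3.

Lemma split_tribhom (b : int) :
  [/\ (split_H b %| tribhom (split_A1 b) (split_B b))%Z,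
      (split_H b %| tribhom (split_A2 b) (split_B b))%Z &
      (split_H b %| tribhom (split_A3 b) (split_B b))%Z].
Proof.
split; apply/dvdzP.
- exists (-27 + 324 * b ^+ 2 + 1026 * b ^+ 3 - 1152 * b ^+ 4 - 5472 * b ^+ 5
    - 10528 * b ^+ 6).
  by rewrite /tribhom /split_A1 /split_B /split_H; ring.
- exists (-27 + 324 * b ^+ 2 - 1026 * b ^+ 3 - 1152 * b ^+ 4 + 5472 * b ^+ 5
    - 10528 * b ^+ 6).
  by rewrite /tribhom /split_A2 /split_A1 /split_B /split_H; ring.
- exists (216 - 2592 * b ^+ 2 + 9216 * b ^+ 4 - 19744 * b ^+ 6).
  by rewrite /tribhom /split_A3 /split_A2 /split_A1 /split_B /split_H; ring.
Qed.

Lemma tribpoly_dehom (p : nat) (x y u : int) : prime p -> ~~ (p%:Z %| y)%Z ->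
  (p%:Z %| y * u - 1)%Z -> (p%:Z %| tribhom x y)%Z -> (p%:Z %| tribpoly (x * u))%Z.
Proof.
move=> pp py hu hxy.
have : (p%:Z %| y ^+ 3 * tribpoly (x * u))%Z.
  have -> : y ^+ 3 * tribpoly (x * u) = tribhom x y + (y * u - 1) *
    (x ^+ 3 * ((y * u) ^+ 2 + y * u + 1) - x ^+ 2 * y * (y * u + 1) - x * y ^+ 2).
    by rewrite /tribpoly /tribhom; ring.
  by rewrite rpredD // dvdz_mulr.
have cy : coprimez p (y ^+ 3) by apply: coprimezXr; rewrite coprimez_sym coprimez_prime.
by rewrite (Gauss_dvdzr _ cy).
Qed.

Lemma split_H_ndvd (p : nat) (b : int) : prime p -> (p%:Z %| split_H b)%Z ->
  ~~ (p%:Z %| b)%Z.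
Proof.
move=> pp pH; apply: contra (ndvdz_small (prime_gt1 pp) isT) => h.
have -> : 1%N%:Z = split_H b - b * (44 * b ^+ 5 + 16 * b ^+ 3 - 8 * b) by rewrite /split_H; ring.
by rewrite rpredB ?dvdz_mulr.
Qed.

Lemma split_roots (p : nat) (b : int) : prime p -> (76 < p)%N -> (p%:Z %| split_H b)%Z ->
  exists r1 r2 r3 : int,
    [/\ (p%:Z %| tribpoly r1)%Z, (p%:Z %| tribpoly r2)%Z, (p%:Z %| tribpoly r3)%Z &
        ~~ (p%:Z %| vander3 r1 r2 r3)%Z].
Proof.
move=> pp p_gt76 pH.
have pb := split_H_ndvd pp pH.
have p76 : ~~ (p%:Z %| 76%N%:Z)%Z by apply: ndvdz_small.
have pB : ~~ (p%:Z %| split_B b)%Z.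
  by rewrite /split_B Euclidz_dvdM // negb_or p76 -coprimez_prime // coprimezXl ?coprimez_prime.
have [[u v] /= huv] : exists uv : int * int, uv.1 * split_B b + uv.2 * p = 1.
  by apply/coprimezP; rewrite coprimez_prime.
have hu : (p%:Z %| split_B b * u - 1)%Z.
  by apply/dvdzP; exists (- v); rewrite -huv; ring.
have [h1 h2 h3] := split_tribhom b.
have root h := tribpoly_dehom pp pB hu (dvdz_trans pH h).
exists (split_A1 b * u), (split_A2 b * u), (split_A3 b * u).
split; [exact: root h1 | exact: root h2 | exact: root h3 |].
apply: tribpoly_roots_vander3 (root _ h1) (root _ h2) (root _ h3) _ _ => //.
- by apply: ndvdz_small; lia.
- by rewrite (_ : _ - 1 = split_B b * u - 1) // /split_A3; ring.
rewrite (_ : _ - _ = 76%N%:Z * b ^+ 3 * u); last by rewrite /split_A2; ring.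
have pu : ~~ (p%:Z %| u)%Z.
  apply: contra (ndvdz_small (prime_gt1 pp) isT) => h.
  have -> : 1%N%:Z = split_B b * u - (split_B b * u - 1) by ring.
  by rewrite rpredB ?dvdz_mull.
by rewrite !Euclidz_dvdM // (negbTE p76) (negbTE pb) (negbTE pu).
Qed.

(* The bound 22 < p keeps p away from the primes 2 and 11 dividing the discriminant. *)
Definition trib_split_prime (p : nat) : Prop :=
  [/\ prime p, (p %% 3 = 2)%N, (22 < p)%N &
    exists r1 r2 r3 : int,
      [/\ (p%:Z %| tribpoly r1)%Z, (p%:Z %| tribpoly r2)%Z, (p%:Z %| tribpoly r3)%Z &
          ~~ (p%:Z %| vander3 r1 r2 r3)%Z]].

Lemma trib_split_prime_gt (N : nat) : exists p, (N < p)%N /\ trib_split_prime p.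
Proof.
(* Every prime below L except 3 divides b, while split_H b = 2 modulo 3. *)
set L := (N + 80)%N; set b := (\prod_(0 <= i < L | coprime 3 i) i)%N.
have b_gt0 : (0 < b)%N by apply: prodn_cond_gt0 => -[].
have b3 : coprimez b 3.
  rewrite coprimezE /= coprime_sym; apply: (big_ind (coprime 3)) => // *.
  by rewrite coprimeMr; apply/andP.
have bdvd i : (i < L)%N -> coprime 3 i -> (i %| b)%N.
  by move=> iL ci; rewrite /b (big_rem i) ?mem_index_iota //= ci dvdn_mulr.
have H_gt0 : 0 < split_H b.
  have -> : split_H b = 44 * b%:Z ^+ 6 + (4 * b%:Z ^+ 2 - 1) ^+ 2 by rewrite /split_H; ring.
  by rewrite ltr_wpDr ?sqr_ge0 // mulr_gt0 // exprn_gt0 // ltz_nat.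
have H3 : (absz (split_H b) %% 3 = 2)%N.
  have := dvdz_expr_totient b3; rewrite totient_prime //= => /dvdzP[c hc].
  have : split_H b =
      3 * (c * (44 * (b%:Z ^+ 4 + b%:Z ^+ 2 + 1) + 16 * (b%:Z ^+ 2 + 1) - 8) + 17) + 2.
    by rewrite /split_H; nia.
  lia.
have [p [pp pH p3]] := prime_dvd_mod3_2 H3.
have pHz : (p%:Z %| split_H b)%Z by rewrite dvdzE.
have pL : (L <= p)%N.
  rewrite leqNgt; apply/negP => pL; move: (split_H_ndvd pp pHz); rewrite dvdzE /=.
  rewrite bdvd // prime_coprime //; apply/negP => /dvdnP[c pc]; move: p3.
  by rewrite pc modnMl.
have p_gt76 : (76 < p)%N by rewrite /L in pL; lia.
have [r1 [r2 [r3 roots]]] := split_roots pp p_gt76 pHz.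
exists p; split; first by rewrite /L in pL; lia.
by split => //; [lia | exists r1, r2, r3].
Qed.

Lemma totient_ppow_dvdz (p k : nat) (c : int) : prime p ->
  ((p.-1)%:Z %| c)%Z -> ((p ^ k)%N%:Z %| c)%Z -> ((totient (p ^ k))%:Z %| c)%Z.
Proof.
move=> pp h1 hk; apply: (@dvdz_trans (p.-1 * p ^ k)%N%:Z).
  rewrite dvdzE /=; case: k {hk} => [|k]; first by rewrite expn0 (_ : totient 1 = 1)%N.
  by rewrite totient_pfactor // dvdn_mul // dvdn_exp2l.
rewrite PoszM Gauss_dvdz ?h1 //.
rewrite coprimezE /= coprimeXr // -{2}(prednK (prime_gt0 pp)); exact: coprimenS.
Qed.

Lemma trib_split_prime_dvd (p e j : nat) (n : int) : trib_split_prime p ->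
  j \in [:: 0; 2]%N -> ((totient (p ^ e))%:Z %| 3 * (n + j%:Z) - 1)%Z ->
  ((p ^ e)%N%:Z %| trib n)%Z.
Proof.
case: e => [|k] [pp _ p_gt22 [r1 [r2 [r3 [h1 h2 h3 hD]]]]]; first by rewrite dvd1z.
have n22 : ~~ (p%:Z %| 22%N%:Z)%Z by exact: ndvdz_small.
have [a1 [a2 [a3 [g1 g2 g3 nD]]]] := tribpoly_lift_roots pp n22 h1 h2 h3 hD k.
rewrite -PoszX in g1 g2 g3; have p_gt2 : (2 < p)%N by lia.
exact: (trib_dvd_ppow pp p_gt2 g1 g2 g3 nD).
Qed.

Lemma trib_split_prime_val (p : nat) (c n : int) : trib_split_prime p -> c = 1 \/ c = -5 ->
  rat_congr (p.-1)%:Z n%:~R (c%:~R / 3) ->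
  val_ge (padic_val p (trib n)%:~R) (padic_val p (n%:~R - c%:~R / 3)).
Proof.
move=> Sp c15 /rat_congr_third hM; have [pp _ p_gt22 _] := Sp; have p_gt3 : (3 < p)%N by lia.
have c3 : coprimez c 3 by case: c15 => ->.
have -> : n%:~R - c%:~R / 3 = (3 * n - c)%:~R / 3 :> rat.
  by rewrite intrB intrM; field.
apply: padic_val_ge_third => // [|k hk].
  have -> : 3 * n - c = n * 3 + - c by ring.
  by rewrite /coprimez gcdzC gcdzMDl gcdzN gcdzC.
have := totient_ppow_dvdz pp (hM c3) hk.
case: c15 => -> h; first by apply: (@trib_split_prime_dvd _ _ 0); rewrite ?addr0.
apply: (@trib_split_prime_dvd _ _ 2) => //.
by rewrite (_ : _ - 1 = 3 * n - -5) //; lia.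
Qed.

Theorem theorem4 :
  exists S : nat -> Prop,
    (forall N : nat, exists p : nat, (N < p)%N /\ S p) /\
    (forall p : nat, S p ->
       [/\ prime p, (p %% 3 = 2)%N,
        (forall n : int, rat_congr (p.-1)%:Z n%:~R (1 / 3) ->
           val_ge (padic_val p (trib n)%:~R) (padic_val p (n%:~R - 1 / 3)))
        & (forall n : int, rat_congr (p.-1)%:Z n%:~R (- 5 / 3) ->
           val_ge (padic_val p (trib n)%:~R) (padic_val p (n%:~R + 5 / 3)))]).
Proof.
exists trib_split_prime; split => [|p Sp]; first exact: trib_split_prime_gt.
have [pp p3 _ _] := Sp; split => // n.
- exact: (@trib_split_prime_val p 1 n Sp (or_introl erefl)).
- by have := @trib_split_prime_val p (-5) n Sp (or_intror erefl); rewrite mulNr opprK.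
Qed.
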